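(* Let $G\in M_n(R)$ be the matrix with $G_{i,i+n-2}=1$ for $i=1,2$, $G_{i,i-2}=x^2$ for $3\le i\le n$, and all other entries $0$, and let $\alpha$ be the automorphism $\alpha(\lambda)=G^{-1}\lambda G$ of $\Lambda$. Identify $\mathrm D_R\Lambda=\operatorname{Hom}_R(\Lambda,R)$ with $\{Y\in M_n(K(x)):\operatorname{tr}(Y\lambda)\in R\ \forall\lambda\in\Lambda\}$ via the trace pairing, so that the $\Lambda$-bimodule structure becomes matrix multiplication on both sides. Then $f:\Lambda\to\mathrm D_R\Lambda$, $\mu\mapsto\mu G^{-1}$, is an isomorphism of $\Lambda$-bimodules ${}_1\Lambda_\alpha\cong\mathrm D_R\Lambda$.
   Context: $K$ a field, $R=K[x]$, $n\ge3$. $\Lambda\subset M_n(K(x))$ is the $R$-order with $(i,j)$ entry $x^{c_{ij}}R$, $c_{ij}=0$ for $i\le j$ except $c_{1n}=-1$, $c_{ij}=1$ for $i=j+1$, $c_{ij}=2$ for $i\ge j+2$. For an algebra automorphism $\varsigma$ of $\Lambda$, ${}_1\Lambda_\varsigma$ denotes $\Lambda$ as a vector space with bimodule structure $a\cdot m\cdot b=am\varsigma(b)$. The bimodule $\operatorname{Hom}_R(\Lambda,R)$ has structure $(\lambda f\mu)(m)=f(\mu m\lambda)$. *)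

From HB Require Import structures.
From mathcomp Require Import all_boot all_order all_algebra.
From mathcomp Require Import fraction.
Set Implicit Arguments. Unset Strict Implicit. Unset Printing Implicit Defensive.
Import Order.TTheory GRing.Theory Num.Theory.
Local Open Scope ring_scope.

(* K(x) as the fraction field of R = K[x] *)
Definition FK (K : fieldType) := {fraction {poly K}}.
Definition toF (K : fieldType) (p : {poly K}) : FK K := @FracField.tofrac _ p.

Definition xF (K : fieldType) : FK K := toF 'X.

Definition inR (K : fieldType) (a : FK K) : Prop := exists p : {poly K}, a = toF p.

(* exponents c_ij, with 0-based indices: paper's (i,j) is our (i-1,j-1) *)
Definition cexp (n : nat) (i j : 'I_n) : int :=
  if (i <= j)%N then (if ((i == 0%N :> nat) && (j == n.-1 :> nat)) then (-1)%R else 0%R)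
  else if (i == j.+1 :> nat) then 1%R else 2%R.

Definition inLam (K : fieldType) (n : nat) (A : 'M[FK K]_n) : Prop :=
  forall i j : 'I_n, exists p : {poly K}, A i j = (xF K) ^ (cexp i j) * toF p.

(* the matrix G (0-based): G_{i,i+n-2}=1 for i=0,1; G_{i,i-2}=x^2 for i>=2 *)
Definition Gmat (K : fieldType) (n : nat) : 'M[FK K]_n :=
  \matrix_(i < n, j < n)
    if ((i < 2)%N && (j == (i + n - 2)%N :> nat)) then 1
    else if ((2 <= i)%N && ((j + 2)%N == i :> nat)) then (xF K) ^+ 2 else 0.

Definition alpha (K : fieldType) (n : nat) (A : 'M[FK K]_n) : 'M[FK K]_n :=
  invmx (Gmat K n) *m A *m Gmat K n.

Definition inDLam (K : fieldType) (n : nat) (Y : 'M[FK K]_n) : Prop :=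
  forall L : 'M[FK K]_n, inLam L -> inR (\tr (Y *m L)).

Definition fmap (K : fieldType) (n : nat) (M : 'M[FK K]_n) : 'M[FK K]_n :=
  M *m invmx (Gmat K n).

(* G is a monomial matrix: column j has the single entry x^(w j) in row j + 2 (mod n). Multiplying by
   such a matrix permutes entries and shifts their x-adic valuations, so both alpha(Lambda) and
   Lambda G^-1 are again matrices with prescribed valuations c'_ij. By the trace pairing, D_R Lambda is
   the matrix set with valuations -c_ji, and the theorem reduces to two identities between the
   exponents c_ij, the shift j -> j + 2 and the weights w, checked by case analysis. *)

From HB Require Import structures.
From mathcomp Require Import all_boot all_order all_algebra perm.
From mathcomp Require Import fraction zify.

Set Implicit Arguments.
Unset Strict Implicit.
Unset Printing Implicit Defensive.

Import GRing.Theory.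
Local Open Scope ring_scope.

Section MonomialMatrix.
Variables (F : fieldType) (n : nat).
Implicit Types (s : {perm 'I_n}) (d : 'I_n -> F) (A : 'M[F]_n).

Definition monomial_mx s d : 'M[F]_n :=
  \matrix_(i, j) if i == s j then d j else 0.

Lemma mulmx_monomial A s d i j :
  (A *m monomial_mx s d) i j = A i (s j) * d j.
Proof.
rewrite mxE (bigD1 (s j)) //= mxE eqxx big1 ?addr0 // => k /negbTE nk.
by rewrite mxE nk mulr0.
Qed.

Lemma mul_monomial_mx s d A i j :
  (monomial_mx s d *m A) i j = d (s^-1%g i) * A (s^-1%g i) j.
Proof.
rewrite mxE (bigD1 (s^-1%g i)) //= mxE permKV eqxx big1 ?addr0 // => k nk.
rewrite mxE; case: eqP => [ik|_]; last by rewrite mul0r.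
by rewrite ik permK eqxx in nk.
Qed.

Lemma mulmx_monomialV s d : (forall j, d j != 0) ->
  monomial_mx s d *m monomial_mx s^-1 (fun j => (d (s^-1%g j))^-1) = 1%:M.
Proof.
move=> d_neq0; apply/matrixP => i j.
rewrite mul_monomial_mx !mxE (inj_eq perm_inj) eq_sym.
by case: eqP => [->|_]; rewrite ?mulfV ?mulr0.
Qed.

Lemma invmx_monomial s d : (forall j, d j != 0) ->
  invmx (monomial_mx s d) = monomial_mx s^-1 (fun j => (d (s^-1%g j))^-1).
Proof.
move=> /(mulmx_monomialV s) dV.
by rewrite -[RHS]mul1mx -(mulVmx (proj1 (mulmx1_unit dV))) -mulmxA dV mulmx1.
Qed.

End MonomialMatrix.

Section XadicOrder.
Variables (K : fieldType) (n : nat).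
Local Notation F := (FK K).
Local Notation x := (xF K).
Implicit Types (c e : 'I_n -> 'I_n -> int) (w : 'I_n -> int) (s : {perm 'I_n}).

Lemma xF_neq0 : x != 0.
Proof. by rewrite /xF /toF tofrac_eq0 polyX_eq0. Qed.

Lemma xexp_neq0 (k : int) : x ^ k != 0.
Proof. by rewrite expfz_eq0 (negbTE xF_neq0) andbF. Qed.

Lemma inR_add a b : inR a -> inR b -> inR (a + b :> F).
Proof. by move=> [p ->] [q ->]; exists (p + q); rewrite /toF tofracD. Qed.

Lemma inR_mul a b : inR a -> inR b -> inR (a * b :> F).
Proof. by move=> [p ->] [q ->]; exists (p * q); rewrite /toF tofracM. Qed.

Lemma inR_sum (I : finType) (f : I -> F) : (forall i, inR (f i)) -> inR (\sum_i f i).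
Proof.
move=> fR; apply: (big_ind (@inR K)) => //; last exact: inR_add.
by exists 0; rewrite /toF tofrac0.
Qed.

Lemma inR_xexp (k : int) : 0 <= k -> inR (x ^ k).
Proof. by case: k => // k _; exists ('X ^+ k); rewrite /xF /toF rmorphXn. Qed.

Definition xorder c (A : 'M[F]_n) : Prop :=
  forall i j, exists p : {poly K}, A i j = x ^ c i j * toF p.

Lemma eq_xorder c c' A : c =2 c' -> xorder c A -> xorder c' A.
Proof. by move=> cc' cA i j; rewrite -cc'; exact: cA. Qed.

Lemma xorder_mulmx_monomial c s w A : xorder c A ->
  xorder (fun i j => c i (s j) + w j) (A *m monomial_mx s (fun j => x ^ w j)).
Proof.
move=> cA i j; have [p cAij] := cA i (s j); exists p.
by rewrite mulmx_monomial cAij expfzDr ?xF_neq0 // mulrAC.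
Qed.

Lemma xorder_monomial_mulmx c s w A : xorder c A ->
  xorder (fun i j => w (s^-1%g i) + c (s^-1%g i) j)
         (monomial_mx s (fun j => x ^ w j) *m A).
Proof.
move=> cA i j; have [p cAij] := cA (s^-1%g i) j; exists p.
by rewrite mul_monomial_mx cAij expfzDr ?xF_neq0 // mulrA.
Qed.

Lemma invmx_xmonomial s w :
  invmx (monomial_mx s (fun j => x ^ w j))
  = monomial_mx s^-1 (fun j => x ^ (- w (s^-1%g j))).
Proof.
rewrite invmx_monomial => [|j]; last exact: xexp_neq0.
by apply/matrixP => i j; rewrite !mxE invr_expz.
Qed.

Lemma xorder_tr c e M L : xorder c M -> xorder e L ->
  (forall i j, 0 <= c i j + e j i) -> inR (\tr (M *m L)).
Proof.
move=> cM eL ce_ge0; apply: inR_sum => i; rewrite mxE; apply: inR_sum => j.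
have [p ->] := cM i j; have [q ->] := eL j i.
rewrite mulrACA -expfzDr ?xF_neq0 //.
by apply: inR_mul; [exact: inR_xexp | exists (p * q); rewrite /toF tofracM].
Qed.

(* Testing against the matrix x^(c b a) E_(b, a) isolates the entry (a, b). *)
Lemma xorder_of_tr c Y : (forall L, xorder c L -> inR (\tr (Y *m L))) ->
  xorder (fun i j => - c j i) Y.
Proof.
move=> YR a b; pose L : 'M[F]_n := \matrix_(i, j) if (i == b) && (j == a) then x ^ c b a else 0.
have cL : xorder c L.
  move=> i j; rewrite mxE; case: andP => [[/eqP -> /eqP ->]|_].
    by exists 1; rewrite /toF tofrac1 mulr1.
  by exists 0; rewrite /toF tofrac0 mulr0.
have trL : \tr (Y *m L) = Y a b * x ^ c b a.
  rewrite /mxtrace (bigD1 a) //= big1 ?addr0 => [|i /negbTE ia].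
    rewrite mxE (bigD1 b) //= mxE !eqxx big1 ?addr0 // => j /negbTE jb.
    by rewrite mxE jb mulr0.
  by rewrite mxE big1 // => j _; rewrite mxE ia andbF mulr0.
have [p YLp] := YR L cL; exists p.
by rewrite -YLp trL mulrCA -expfzDr ?xF_neq0 // addNr expr0z mulr1.
Qed.

End XadicOrder.

Section RotationByTwo.
Variable n : nat.
Hypothesis n_ge3 : (3 <= n)%N.

Definition rot2 : {perm 'I_n} := perm (inj_comp (@ordS_inj n) (@ordS_inj n)).

Lemma rot2E (j : 'I_n) :
  val (rot2 j) = (if j + 2 < n then j + 2 else j + 2 - n)%N.
Proof.
rewrite permE /= -[(_ %% n).+1]addn1 modnDml addn1 -addn2.
have jn := ltn_ord j; case: ltnP => [lt_j2n | le_nj2]; first exact: modn_small.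
by rewrite -{1}(subnK le_nj2) modnDr modn_small //; lia.
Qed.

Definition gmat_weight (j : 'I_n) : int := if (j + 2 < n)%N then 2 else 0.

Lemma cexp_add_rot2 (i k : 'I_n) : cexp i k + cexp (rot2 k) i = gmat_weight k.
Proof.
have := ltn_ord i; have := ltn_ord k; move: (rot2E k).
rewrite /cexp /gmat_weight; do ! case: ifP => //=; lia.
Qed.

Lemma cexp_rot2 (i j : 'I_n) :
  cexp (rot2 i) (rot2 j) + gmat_weight j - gmat_weight i = cexp i j.
Proof.
have := ltn_ord i; have := ltn_ord j; move: (rot2E i) (rot2E j).
rewrite /cexp /gmat_weight; do ! case: ifP => //=; lia.
Qed.

Lemma Gmat_monomial (K : fieldType) :
  Gmat K n = monomial_mx rot2 (fun j => xF K ^ gmat_weight j).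
Proof.
apply/matrixP => i j; rewrite !mxE /gmat_weight.
have := ltn_ord i; have := ltn_ord j; move: (rot2E j).
have -> : (i == rot2 j) = (val i == val (rot2 j)) by [].
do ! case: ifP => //=; lia.
Qed.

End RotationByTwo.

Section SelfDualOrder.
Variables (K : fieldType) (n : nat).
Hypothesis n_ge3 : (3 <= n)%N.
Local Notation G := (Gmat K n).
Local Notation s := (rot2 n).
Local Notation w := (@gmat_weight n).
Implicit Types L M Y : 'M[FK K]_n.

Lemma Gmat_unit : G \in unitmx.
Proof.
rewrite (Gmat_monomial n_ge3).
exact: proj1 (mulmx1_unit (mulmx_monomialV _ (fun j => xexp_neq0 _ _))).
Qed.

Lemma invmx_Gmat :
  invmx G = monomial_mx s^-1 (fun j => xF K ^ (- w (s^-1%g j))).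
Proof. by rewrite (Gmat_monomial n_ge3) invmx_xmonomial. Qed.

Lemma alpha_inLam L : inLam L -> inLam (alpha L).
Proof.
move=> LL; rewrite /alpha invmx_Gmat (Gmat_monomial n_ge3).
apply: eq_xorder (xorder_mulmx_monomial _ _ (xorder_monomial_mulmx _ _ LL)) => i j /=.
by rewrite invgK permK -(cexp_rot2 n_ge3 i j); lia.
Qed.

Lemma conjGmat_inLam L : inLam L -> inLam (G *m L *m invmx G).
Proof.
move=> LL; rewrite invmx_Gmat (Gmat_monomial n_ge3).
apply: eq_xorder (xorder_mulmx_monomial _ _ (xorder_monomial_mulmx _ _ LL)) => i j /=.
by have := cexp_rot2 n_ge3 (s^-1%g i) (s^-1%g j); rewrite !permKV; lia.
Qed.

Lemma inDLam_xorder Y : inDLam Y <-> xorder (fun i j => - cexp j i) Y.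
Proof.
split; first exact: xorder_of_tr.
by move=> YD L LL; apply: xorder_tr YD LL _ => i j; rewrite addNr.
Qed.

Lemma fmap_inDLam M : inLam M -> inDLam (fmap M).
Proof.
move=> LM; apply/inDLam_xorder; rewrite /fmap invmx_Gmat.
apply: eq_xorder (xorder_mulmx_monomial _ _ LM) => i j /=.
by rewrite -(cexp_add_rot2 n_ge3 i (s^-1%g j)) permKV; lia.
Qed.

Lemma mulmxGmat_inLam Y : inDLam Y -> inLam (Y *m G).
Proof.
move=> /inDLam_xorder YD; rewrite (Gmat_monomial n_ge3).
apply: eq_xorder (xorder_mulmx_monomial _ _ YD) => i j /=.
by rewrite -(cexp_add_rot2 n_ge3 i j); lia.
Qed.

End SelfDualOrder.

Theorem proposition3p20 (K : fieldType) (n : nat) (hn : (3 <= n)%N) :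
  (Gmat K n \in unitmx /\
   (forall L : 'M[FK K]_n, inLam L -> inLam (alpha L)) /\
   (forall L : 'M[FK K]_n, inLam L -> exists2 L' : 'M[FK K]_n, inLam L' & alpha L' = L)) /\
  (forall M : 'M[FK K]_n, inLam M -> inDLam (fmap M)) /\
  (forall Y : 'M[FK K]_n, inDLam Y -> exists2 M : 'M[FK K]_n, inLam M & fmap M = Y) /\
  (forall M N : 'M[FK K]_n, inLam M -> inLam N -> fmap M = fmap N -> M = N) /\
  (forall a b M N : 'M[FK K]_n, inLam a -> inLam b -> inLam M -> inLam N ->
     fmap (M + N) = fmap M + fmap N /\
     fmap (a *m M *m alpha b) = a *m fmap M *m b).
Proof.
have G_unit := Gmat_unit K hn.
split; [split; [exact: G_unit | split] | split; [|split; [|split]]].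
- exact: alpha_inLam.
- move=> L LL; exists (Gmat K n *m L *m invmx (Gmat K n)); first exact: conjGmat_inLam.
  by rewrite /alpha !mulmxA mulVmx // mul1mx mulmxKV.
- exact: fmap_inDLam.
- move=> Y YD; exists (Y *m Gmat K n); first exact: mulmxGmat_inLam.
  by rewrite /fmap mulmxK.
- by move=> M N _ _; rewrite /fmap => /(congr1 (mulmx^~ (Gmat K n))); rewrite !mulmxKV.
- move=> a b M N _ _ _ _; rewrite /fmap /alpha mulmxDl; split=> //.
  by rewrite !mulmxA mulmxK.
Qed.
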